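(* Let $A$ be a cyclic Leibniz algebra generated by $a$, with notation as in the context. The maximal subalgebras of $A$ are precisely the null spaces $\{b\in A: r_j(L_a)(b)=0\}$, where $r_j(x)=p(x)/p_j(x)$, for $j=1,\dots,s$.
   Context: A (left) Leibniz algebra is an algebra satisfying $x(yz)=(xy)z+y(xz)$ for all $x,y,z$; all algebras are finite-dimensional over a field $F$. $A$ is a cyclic Leibniz algebra generated by $a$: $A$ is generated as an algebra by the single element $a$, and with $a^1=a$, $a^{k+1}=aa^k$, the elements $a,a^2,\dots,a^n$ form a basis of $A$. Write $aa^n=\alpha_2a^2+\cdots+\alpha_na^n$. $L_a:A\to A$ is $b\mapsto ab$, with characteristic (and minimal) polynomial $p(x)=x^n-\alpha_nx^{n-1}-\cdots-\alpha_2x=p_1(x)^{n_1}\cdots p_s(x)^{n_s}$, the $p_j$ distinct monic irreducibles over $F$, $p_1(x)=x$. *)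

From HB Require Import structures.
From mathcomp Require Import all_boot all_order all_algebra.
Set Implicit Arguments. Unset Strict Implicit. Unset Printing Implicit Defensive.
Import Order.TTheory GRing.Theory Num.Theory.
Local Open Scope ring_scope.

(* A finite-dimensional algebra over F of dimension d is modelled by the
   carrier 'rV[F]_d with a multiplication mul : A -> A -> A. *)

Definition bilinear_mul (F : fieldType) (d : nat)
  (mul : 'rV[F]_d -> 'rV[F]_d -> 'rV[F]_d) : Prop :=
  (forall (k : F) x y z, mul (k *: x + y) z = k *: mul x z + mul y z) /\
  (forall (k : F) x y z, mul x (k *: y + z) = k *: mul x y + mul x z).

Definition left_leibniz (F : fieldType) (d : nat)
  (mul : 'rV[F]_d -> 'rV[F]_d -> 'rV[F]_d) : Prop :=
  forall x y z, mul x (mul y z) = mul (mul x y) z + mul y (mul x z).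

Definition is_subalgebra (F : fieldType) (d : nat)
  (mul : 'rV[F]_d -> 'rV[F]_d -> 'rV[F]_d) (U : {vspace 'rV[F]_d}) : Prop :=
  forall x y, x \in U -> y \in U -> mul x y \in U.

Definition is_maximal_subalgebra (F : fieldType) (d : nat)
  (mul : 'rV[F]_d -> 'rV[F]_d -> 'rV[F]_d) (U : {vspace 'rV[F]_d}) : Prop :=
  [/\ is_subalgebra mul U, U != fullv &
      forall V : {vspace 'rV[F]_d}, is_subalgebra mul V -> (U <= V)%VS ->
        V = U \/ V = fullv].

Definition generated_by (F : fieldType) (d : nat)
  (mul : 'rV[F]_d -> 'rV[F]_d -> 'rV[F]_d) (a : 'rV[F]_d) : Prop :=
  forall U : {vspace 'rV[F]_d}, is_subalgebra mul U -> a \in U -> U = fullv.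

(* apow mul a k = a^(k+1), with a^1 = a and a^(k+1) = a a^k *)
Definition apow (F : fieldType) (d : nat)
  (mul : 'rV[F]_d -> 'rV[F]_d -> 'rV[F]_d) (a : 'rV[F]_d) (k : nat) : 'rV[F]_d :=
  iter k (mul a) a.

(* matrix of L_a : b |-> a b (row-vector convention: b *m La = mul a b) *)
Definition Lmat (F : fieldType) (d : nat)
  (mul : 'rV[F]_d -> 'rV[F]_d -> 'rV[F]_d) (a : 'rV[F]_d) : 'M[F]_d :=
  lin1_mx (mul a).

From HB Require Import structures.
From mathcomp Require Import all_boot all_order all_algebra.
From Stdlib Require Import Classical.
Import Order.TTheory GRing.Theory Num.Theory.
Set Implicit Arguments. Unset Strict Implicit. Unset Printing Implicit Defensive.
Local Open Scope ring_scope.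

(* Write L = L_a and P = char_poly L. Since a, aL, ..., aL^(n-1) is a basis
   (the powers a^k), the map q |-> a q(L) identifies F[x]/(P) with A, so the
   L-stable subspaces of A are the images of the ideals (g), g %| P.  With
   P = prod_j p_j^n_j, the maximal proper L-stable subspaces are therefore
   exactly the null spaces K_j of (P / p_j)(L), i.e. the images of (p_j).
   The Leibniz identity forces left multiplication by a^k (k >= 2) to vanish,
   so x y = q(0) L(y) for x = a q(L).  Hence every L-stable subspace is a
   subalgebra, and a subalgebra is either contained in the Leibniz kernel
   W = K_1 = span(a^2, ..., a^n) (p_1 = x) or is L-stable. *)

Lemma lin1_mxE (F : fieldType) (n : nat) (f : 'rV[F]_n -> 'rV[F]_n) :
  (forall (k : F) x y, f (k *: x + y) = k *: f x + f y) ->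
  forall u, u *m lin1_mx f = f u.
Proof.
move=> f_lin u.
have f0 : f 0 = 0.
  have := f_lin 1 0 0; rewrite !scale1r addr0 => f00.
  by apply: (addrI (f 0)); rewrite addr0 -f00.
have fZ k x : f (k *: x) = k *: f x by rewrite -[k *: x]addr0 f_lin f0 addr0.
have fD x y : f (x + y) = f x + f y by rewrite -[x]scale1r f_lin !scale1r.
rewrite [u in RHS]matrix_sum_delta big_ord1 (big_morph f fD f0); apply/rowP=> i.
by rewrite mxE summxE; apply: eq_bigr => j _; rewrite fZ !mxE.
Qed.

Lemma poly_ideal_principal (F : fieldType) (I : {poly F} -> Prop) :
  (forall p q, I p -> I q -> I (p - q)) ->
  (forall p q, I q -> I (p * q)) ->
  forall p, I p -> p != 0 -> exists g, I g /\ forall q, I q -> g %| q.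
Proof.
move=> I_sub I_mul p; move Ek: (size p) => k.
elim/ltn_ind: k p Ek => k IH p Ek Ip p0.
(* If p does not divide some q in I, then q mod p is a smaller element. *)
have [p_gen | ] := classic (forall q, I q -> p %| q); first by exists p.
move=> /not_all_ex_not [q q_not]; have [Iq p_ndvd_q] := imply_to_and _ _ q_not.
have r0 : q %% p != 0 by apply/negP => /eqP/modp_eq0P.
have Ir : I (q %% p).
  have -> : q %% p = q - q %/ p * p.
    by rewrite [X in X - _](divp_eq q p) [_ + q %% p]addrC addrK.
  exact: I_sub (I_mul _ _ Ip).
by apply: (IH (size (q %% p))) Ir r0 => //; rewrite -Ek ltn_modp.
Qed.

Lemma irreducible_factor_dvd (F : fieldType) (I : finType)
    (ps : I -> {poly F}) (ns : I -> nat) (g : {poly F}) :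
  (forall i, irreducible_poly (ps i)) ->
  g %| \prod_i ps i ^+ ns i -> (1 < size g)%N -> exists i, ps i %| g.
Proof.
move=> ps_irr g_dvd g_gt1; apply/existsP; apply: contraTT g_gt1 => /existsPn no_factor.
have : coprimep (\prod_i ps i ^+ ns i) g.
  apply: (big_ind (fun p => coprimep p g)) => [|p q|i _].
  - exact: coprime1p.
  - by rewrite coprimepMl => -> ->.
  - by apply: coprimep_expl; rewrite irreducible_poly_coprime ?no_factor.
by move/(coprimep_dvdr g_dvd); rewrite coprimepp => /eqP ->.
Qed.

Definition kerv (F : fieldType) (n : nat) (M : 'M[F]_n) : {vspace 'rV[F]_n} :=
  lker (linfun (mulmxr M)).

Lemma mem_kerv (F : fieldType) (n : nat) (M : 'M[F]_n) b :
  (b \in kerv M) = (b *m M == 0).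
Proof. by rewrite memv_ker lfunE. Qed.

Lemma kerv_eqP (F : fieldType) (n : nat) (M : 'M[F]_n) (U : {vspace 'rV[F]_n}) :
  (forall b, b \in U <-> b *m M = 0) <-> U = kerv M.
Proof.
split=> [memU | -> b]; last by rewrite mem_kerv; split=> /eqP.
by apply/vspaceP => b; rewrite mem_kerv; apply/idP/eqP => /memU.
Qed.

Definition Lstable (F : fieldType) (n : nat) (L : 'M[F]_n)
  (V : {vspace 'rV[F]_n}) : Prop :=
  forall b, b \in V -> b *m L \in V.

(* The null space of r(L), where r = char_poly L / p; for the irreducible
   factors p of char_poly L these are the candidate maximal subalgebras. *)
Definition cofactor_kernel (F : fieldType) (n : nat) (L : 'M[F]_n.+1)
  (p : {poly F}) : {vspace 'rV[F]_n.+1} :=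
  kerv (horner_mx L (char_poly L %/ p)).

Section CyclicVector.
Variables (F : fieldType) (n : nat) (L : 'M[F]_n.+1) (a : 'rV[F]_n.+1).
Local Notation P := (char_poly L).

Definition cycv (q : {poly F}) : 'rV[F]_n.+1 := a *m horner_mx L q.

Lemma cycv0 : cycv 0 = 0.
Proof. by rewrite /cycv rmorph0 mulmx0. Qed.

Lemma cycvD p q : cycv (p + q) = cycv p + cycv q.
Proof. by rewrite /cycv rmorphD mulmxDr. Qed.

Lemma cycvB p q : cycv (p - q) = cycv p - cycv q.
Proof. by rewrite /cycv rmorphB mulmxBr. Qed.

Lemma cycvZ c q : cycv (c *: q) = c *: cycv q.
Proof. by rewrite /cycv horner_mxZ scalemxAr. Qed.

Lemma cycvM p q : cycv (p * q) = cycv p *m horner_mx L q.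
Proof. by rewrite /cycv rmorphM mulmxA. Qed.

Lemma cycvC c : cycv c%:P = c *: a.
Proof. by rewrite /cycv horner_mx_C mul_mx_scalar. Qed.

Lemma cycv1 : cycv 1 = a.
Proof. by rewrite -polyC1 cycvC scale1r. Qed.

Lemma cycvXn k : cycv 'X^k = a *m L ^+ k.
Proof. by rewrite /cycv rmorphXn /= horner_mx_X. Qed.

Lemma cycv_char : cycv P = 0.
Proof. by rewrite /cycv Cayley_Hamilton mulmx0. Qed.

Lemma stable_horner V : Lstable L V ->
  forall q b, b \in V -> b *m horner_mx L q \in V.
Proof.
move=> stV; elim/poly_ind => [|p c IH] b bV; first by rewrite rmorph0 mulmx0 mem0v.
rewrite rmorphD rmorphM /= horner_mx_X horner_mx_C -mulmxE mulmxDr mulmxA.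
by rewrite mul_mx_scalar memvD ?memvZ // stV // IH.
Qed.

Lemma stable_kerv_horner h : Lstable L (kerv (horner_mx L h)).
Proof.
have cLh : comm_mx L (horner_mx L h) := comm_mx_horner h (erefl (L *m L)).
by move=> b; rewrite !mem_kerv -mulmxA cLh mulmxA => /eqP->; rewrite mul0mx.
Qed.

Hypothesis krylov_basis : basis_of fullv (mkseq (fun i => a *m L ^+ i) n.+1).

Let krylov := mktuple (fun i : 'I_n.+1 => a *m L ^+ i).

Let krylov_tuple_basis : basis_of fullv krylov.
Proof. by have := krylov_basis; rewrite /mkseq -val_enum_ord -map_comp. Qed.

Let cycv_poly (k : nat -> F) :
  \sum_(i < n.+1) k i *: krylov`_i = cycv (\poly_(i < n.+1) k i).
Proof.
rewrite poly_def (big_morph cycv cycvD cycv0).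
by apply: eq_bigr => i _; rewrite cycvZ cycvXn -tnth_nth tnth_mktuple.
Qed.

Lemma cycv_surj b : exists q, b = cycv q.
Proof.
exists (\poly_(i < n.+1) coord krylov (inord i) b); rewrite -cycv_poly.
under eq_bigr => i _ do rewrite inord_val.
by apply: coord_span; rewrite (span_basis krylov_tuple_basis) memvf.
Qed.

(* The minimal polynomial of L equals its characteristic polynomial. *)
Lemma cycv_eq0 q : (cycv q == 0) = (P %| q).
Proof.
apply/eqP/idP => [q0 | /dvdpP [h ->]]; last by rewrite cycvM Cayley_Hamilton mulmx0.
have P0 : P != 0 := monic_neq0 (char_poly_monic L).
set r := q %% P; have r0 : cycv r = 0.
  by move: q0; rewrite {1}(divp_eq q P) cycvD cycvM Cayley_Hamilton mulmx0 add0r.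
have r_small : (size r <= n.+1)%N by have := ltn_modp q P; rewrite size_char_poly P0.
have rE : r = \poly_(i < n.+1) r`_i.
  apply/polyP => i; rewrite coef_poly; case: ltnP => // le_n_i.
  by rewrite nth_default // (leq_trans r_small le_n_i).
have := basis_free krylov_tuple_basis => /freeP /(_ (fun i => r`_i)).
rewrite cycv_poly -rE => /(_ r0) r_coef0; apply/modp_eq0P; rewrite -/r.
apply/polyP => i.
by rewrite coef0 rE coef_poly; case: ltnP => // lt_i_n; apply: (r_coef0 (Ordinal lt_i_n)).
Qed.

Lemma char_poly_neq0 : P != 0.
Proof. exact: monic_neq0 (char_poly_monic L). Qed.

Lemma cycv_vspaceP (U V : {vspace 'rV[F]_n.+1}) :
  (forall q, (cycv q \in U) = (cycv q \in V)) -> U = V.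
Proof. by move=> UV; apply/vspaceP => b; have [q ->] := cycv_surj b. Qed.

Lemma stable_ideal V : Lstable L V ->
  exists g, g %| P /\ forall q, (cycv q \in V) = (g %| q).
Proof.
move=> stV; pose I q := cycv q \in V.
have I_sub p q : I p -> I q -> I (p - q) by rewrite /I cycvB; apply: memvB.
have I_mul p q : I q -> I (p * q) by rewrite /I mulrC cycvM; apply: stable_horner.
have IP : I P by rewrite /I cycv_char mem0v.
have [g [Ig g_dvd]] := poly_ideal_principal I_sub I_mul IP char_poly_neq0.
exists g; split=> [|q]; first exact: g_dvd.
by apply/idP/idP => [/g_dvd // | /dvdpP [h ->]]; apply: I_mul.
Qed.

Lemma mem_cofactor_kernel d q : d %| P ->
  (cycv q \in cofactor_kernel L d) = (d %| q).
Proof.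
move=> dP; have Pd0 : P %/ d != 0.
  by apply: contraNneq char_poly_neq0 => Pd0; rewrite -(divpK dP) Pd0 mul0r.
rewrite mem_kerv -cycvM cycv_eq0 -[X in X %| _](divpK dP) [_ * d]mulrC.
by rewrite dvdp_mul2r.
Qed.

Section Factorization.
Variables (I : finType) (ps : I -> {poly F}) (ns : I -> nat).
Hypothesis ps_irr : forall i, irreducible_poly (ps i).
Hypothesis ns_gt0 : forall i, (0 < ns i)%N.
Hypothesis char_factor : P = \prod_i ps i ^+ ns i.
Local Notation K i := (cofactor_kernel L (ps i)).

Lemma factor_dvd_char i : ps i %| P.
Proof.
by rewrite char_factor (bigD1 i) //= dvdp_mulr // dvdp_exp ?ns_gt0 ?dvdpp.
Qed.

Lemma mem_K i q : (cycv q \in K i) = (ps i %| q).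
Proof. exact/mem_cofactor_kernel/factor_dvd_char. Qed.

Lemma K_proper i : K i != fullv.
Proof.
apply/negP => /eqP Kfull; have := memvf a; rewrite -Kfull -cycv1 mem_K dvdp1.
by case: (ps_irr i) => /gtn_eqF ->.
Qed.

Lemma stable_sub_K V : Lstable L V -> V != fullv -> exists i, (V <= K i)%VS.
Proof.
move=> stV Vproper; have [g [g_dvd memV]] := stable_ideal stV.
have g0 : g != 0.
  by apply: contraNneq char_poly_neq0 => g0; move: g_dvd; rewrite g0 dvd0p.
have g_gt1 : (1 < size g)%N.
  rewrite ltn_neqAle size_poly_gt0 g0 andbT eq_sym size_poly_eq1.
  apply: contra Vproper => g1; apply/eqP/cycv_vspaceP => q.
  by rewrite memV memvf (eqp_dvdl _ g1) dvd1p.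
rewrite char_factor in g_dvd; have [i ps_g] := irreducible_factor_dvd ps_irr g_dvd g_gt1.
exists i; apply/subvP => b; have [q ->] := cycv_surj b.
by rewrite memV mem_K; apply: dvdp_trans.
Qed.

Lemma stable_over_K V i : Lstable L V -> (K i <= V)%VS -> V = K i \/ V = fullv.
Proof.
move=> stV KV; have [g [_ memV]] := stable_ideal stV.
have g_ps : g %| ps i by rewrite -memV (subvP KV) // mem_K.
have [g1 | g_n1] := boolP (size g == 1); [right | left]; apply/cycv_vspaceP => q.
  by rewrite memV memvf; rewrite size_poly_eq1 in g1; rewrite (eqp_dvdl _ g1) dvd1p.
by rewrite memV mem_K; apply: eqp_dvdl; apply: (ps_irr i).2.
Qed.

End Factorization.
End CyclicVector.

Section LeibnizCyclic.
Variables (F : fieldType) (m : nat).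
Variables (mul : 'rV[F]_m.+1 -> 'rV[F]_m.+1 -> 'rV[F]_m.+1) (a : 'rV[F]_m.+1).
Hypothesis mul_bil : bilinear_mul mul.
Hypothesis mul_leib : left_leibniz mul.
Local Notation La := (Lmat mul a).

Lemma mul0l y : mul 0 y = 0.
Proof.
have := (proj1 mul_bil) 1 0 0 y; rewrite !scale1r addr0 => mul00.
by apply: (addrI (mul 0 y)); rewrite addr0 -mul00.
Qed.

Lemma mulDl x x' y : mul (x + x') y = mul x y + mul x' y.
Proof. by have := (proj1 mul_bil) 1 x x' y; rewrite !scale1r. Qed.

Lemma mulZl k x y : mul (k *: x) y = k *: mul x y.
Proof. by rewrite -[k *: x]addr0 (proj1 mul_bil) mul0l addr0. Qed.

Lemma mulaE b : mul a b = b *m La.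
Proof. by rewrite lin1_mxE // => k y z; apply: (proj2 mul_bil). Qed.

Lemma apow_krylov k : apow mul a k = a *m La ^+ k.
Proof.
elim: k => [|k IH]; first by rewrite expr0 mulmx1.
by rewrite /= mulaE -/(apow mul a k) IH exprSr mulmxA.
Qed.

(* The key consequence of the Leibniz identity: left multiplication by
   q(L_a)(a) is q(0) L_a, since left multiplication by a^k, k >= 2, is zero. *)
Lemma mul_cycv q y : mul (cycv La a q) y = q.[0] *: mul a y.
Proof.
elim/poly_ind: q y => [|p c IH] y; first by rewrite cycv0 mul0l horner0 scale0r.
have mul_apw z : mul (mul a (cycv La a p)) z = 0.
  apply: (addIr (mul (cycv La a p) (mul a z))).
  by rewrite add0r -mul_leib !IH !mulaE -scalemxAl.
rewrite cycvD cycvM horner_mx_X -mulaE cycvC mulDl mul_apw mulZl add0r.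
by rewrite !hornerE.
Qed.

Hypothesis krylov_basis :
  basis_of fullv (mkseq (fun i => a *m La ^+ i) m.+1).
Hypothesis X_dvd_char : 'X %| char_poly La.
(* W = {b | (P / x)(L_a) b = 0} = span(a^2, ..., a^n) is the Leibniz kernel. *)
Local Notation W := (cofactor_kernel La 'X).

Lemma mem_W q : (cycv La a q \in W) = (q.[0] == 0).
Proof.
by rewrite mem_cofactor_kernel // -[X in X %| _]subr0 -polyC0 dvdp_XsubCl.
Qed.

Lemma stable_subalgebra V : Lstable La V -> is_subalgebra mul V.
Proof.
move=> stV x y _ yV; have [q ->] := cycv_surj krylov_basis x.
by rewrite mul_cycv mulaE memvZ // stV.
Qed.

(* A subalgebra not contained in W contains some x with x y = c L_a(y),
   c != 0, hence it is L_a-stable. *)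
Lemma subalgebra_stable V : is_subalgebra mul V -> ~~ (V <= W)%VS -> Lstable La V.
Proof.
move=> subV /subvPn [x xV xW] b bV; have [q Ex] := cycv_surj krylov_basis x.
move: xW (subV x b xV bV); rewrite Ex mem_W mul_cycv mulaE => q0 /(memvZ q.[0]^-1).
by rewrite scalerA mulVf // scale1r.
Qed.

End LeibnizCyclic.

Section MaximalSubalgebras.
Variables (F : fieldType) (m : nat).
Variables (mul : 'rV[F]_m.+1 -> 'rV[F]_m.+1 -> 'rV[F]_m.+1) (a : 'rV[F]_m.+1).
Hypothesis mul_bil : bilinear_mul mul.
Hypothesis mul_leib : left_leibniz mul.
Local Notation La := (Lmat mul a).
Hypothesis krylov_basis :
  basis_of fullv (mkseq (fun i => a *m La ^+ i) m.+1).
Variables (I : finType) (ps : I -> {poly F}) (ns : I -> nat).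
Hypothesis ps_irr : forall i, irreducible_poly (ps i).
Hypothesis ns_gt0 : forall i, (0 < ns i)%N.
Hypothesis char_factor : char_poly La = \prod_i ps i ^+ ns i.
Variable i0 : I.
Hypothesis ps_i0 : ps i0 = 'X.
Local Notation K i := (cofactor_kernel La (ps i)).

Let X_dvd_char : 'X %| char_poly La.
Proof. by rewrite -ps_i0 (factor_dvd_char ns_gt0 char_factor). Qed.

Let K_neq_full := K_proper krylov_basis ps_irr ns_gt0 char_factor.
Let stable_in_K := stable_sub_K krylov_basis ps_irr ns_gt0 char_factor.
Let stable_above_K := stable_over_K krylov_basis ps_irr ns_gt0 char_factor.
Let stable_of_subalgebra (V : {vspace 'rV[F]_m.+1}) :
  is_subalgebra mul V -> ~~ (V <= K i0)%VS -> Lstable La V.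
Proof.
rewrite ps_i0; exact: subalgebra_stable mul_bil mul_leib krylov_basis X_dvd_char V.
Qed.

Lemma K_subalgebra i : is_subalgebra mul (K i).
Proof. exact/(stable_subalgebra mul_bil mul_leib krylov_basis)/stable_kerv_horner. Qed.

(* A maximal subalgebra lies in W = K i0 or is L_a-stable; in both cases it
   lies in, hence equals, some K i. *)
Lemma maximal_subalgebra_K U : is_maximal_subalgebra mul U -> exists i, U = K i.
Proof.
case=> subU Uproper maxU.
have K_max i : (U <= K i)%VS -> U = K i.
  move=> UK; have [-> //|Kfull] := maxU _ (@K_subalgebra i) UK.
  by move: (K_neq_full i); rewrite Kfull eqxx.
have [UW | UnW] := boolP (U <= K i0)%VS; first by exists i0; apply: K_max.
have [i UK] := stable_in_K (stable_of_subalgebra subU UnW) Uproper.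
by exists i; apply: K_max.
Qed.

(* A subalgebra above K i is L_a-stable (so equals K i or A) or lies in W. *)
Lemma K_maximal_subalgebra i : is_maximal_subalgebra mul (K i).
Proof.
split; [exact: K_subalgebra | exact: K_neq_full |] => V subV KV.
have [VW | VnW] := boolP (V <= K i0)%VS; last first.
  exact: stable_above_K (stable_of_subalgebra subV VnW) KV.
(* K i <= V <= W forces K i = W by maximality of K i among stable spaces. *)
have stW : Lstable La (K i0) by apply: stable_kerv_horner.
have [WK | Wfull] := stable_above_K stW (subv_trans KV VW).
  by left; apply/eqP; rewrite eqEsubv KV -WK VW.
by move: (K_neq_full i0); rewrite Wfull eqxx.
Qed.

End MaximalSubalgebras.

Theorem mainTheorem9 (F : fieldType) (m : nat)
  (mul : 'rV[F]_m.+1 -> 'rV[F]_m.+1 -> 'rV[F]_m.+1) (a : 'rV[F]_m.+1)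
  (Hbil : bilinear_mul mul) (Hleib : left_leibniz mul)
  (Hgen : generated_by mul a)
  (Hbasis : basis_of fullv (mkseq (apow mul a) m.+1))
  (s : nat) (ps : 'I_s -> {poly F}) (ns : 'I_s -> nat)
  (Hirr : forall j, ps j \is monic /\ irreducible_poly (ps j))
  (Hdist : injective ps)
  (Hns : forall j, (0 < ns j)%N)
  (Hfact : char_poly (Lmat mul a) = \prod_(j < s) ps j ^+ ns j)
  (HX : exists j, ps j = 'X) :
  forall U : {vspace 'rV[F]_m.+1},
    is_maximal_subalgebra mul U <->
    exists j : 'I_s, forall b : 'rV[F]_m.+1,
      (b \in U) <->
      b *m horner_mx (Lmat mul a) (char_poly (Lmat mul a) %/ ps j) = 0.
Proof.
have krylov : basis_of fullv (mkseq (fun i => a *m Lmat mul a ^+ i) m.+1).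
  by rewrite -(eq_mkseq (apow_krylov a Hbil)).
have ps_irr j : irreducible_poly (ps j) := (Hirr j).2.
have [j0 ps_j0] := HX.
move=> U; split=> [/(maximal_subalgebra_K Hbil Hleib krylov ps_irr Hns Hfact ps_j0) [j ->]
                  | [j /kerv_eqP ->]].
  by exists j; apply/kerv_eqP.
exact: (K_maximal_subalgebra Hbil Hleib krylov ps_irr Hns Hfact ps_j0).
Qed.
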